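(* Let $k\ge 3$ and let $K_{2k-1}$ denote the simplicial complex given by the standard Gale diagram which places the vertex $i$ at $v_i$ for $i=1,\dots,2k-1$ (the boundary complex of the dual of $P_{[2k-1]}$). Let $J=(a_1,\dots,a_{2k-1})$ be a vector of positive integers. Then $K_{2k-1}(J)$ is (isomorphic to) the simplicial complex given by the standard Gale diagram with $a_i$ points at $v_i$ for each $i$; in polytope language, $P_{[2k-1]}(J)=[a_1,\dots,a_{2k-1}]$.
   Context: Let $v_1,\dots,v_{2k-1}$ be the vertices, in counterclockwise order, of a regular $(2k-1)$-gon in $\mathbb{R}^2$ centered at the origin $O$. A standard Gale diagram is a surjection $\phi$ from a finite set $V$ to $\{v_1,\dots,v_{2k-1}\}$; it determines the simplicial complex on $V$ in which $I\subseteq V$ is a face iff $O\in\operatorname{conv}\{\phi(j):j\in V\setminus I\}$. With $a_i=|\phi^{-1}(v_i)|$, the simple polytope dual to the simplicial polytope with this boundary complex is denoted $[a_1,\dots,a_{2k-1}]$, and $P_{[2k-1]}=[1,\dots,1]$ with facet $i$ corresponding to $v_i$. For a complex $K$ on $[m]$ and $J=(j_1,\dots,j_m)$ positive integers, $K(J)$ is the complex on vertices $i_1,\dots,i_{j_i}$ whose minimal non-faces are the sets $\bigcup_{r}\{(i_r)_1,\dots,(i_r)_{j_{i_r}}\}$ for minimal non-faces $\{i_1,\dots,i_s\}$ of $K$; $P(J)$ denotes the simple polytope whose dual boundary complex is $K(J)$ when $K$ is that of $P$. *)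

From HB Require Import structures.
From mathcomp Require Import all_boot all_order all_algebra.
From mathcomp Require Import reals trigo.
Set Implicit Arguments. Unset Strict Implicit. Unset Printing Implicit Defensive.
Import Order.TTheory GRing.Theory Num.Theory.
Local Open Scope ring_scope.

(* Vertex i (0-based, i = 0..n-1) of the regular n-gon of circumradius 1
   centered at the origin, listed counterclockwise. *)
Definition gale_pt (R : realType) (n : nat) (i : 'I_n) : R * R :=
  (cos (2 * pi * i%:R / n%:R), sin (2 * pi * i%:R / n%:R)).

Definition origin_in_conv (R : realType) (V : finType) (p : V -> R * R)
    (S : {set V}) : Prop :=
  exists w : V -> R,
    (forall j, 0 <= w j) /\
    \sum_(j in S) w j = 1 /\
    \sum_(j in S) w j * (p j).1 = 0 /\
    \sum_(j in S) w j * (p j).2 = 0.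

Definition gale_face (R : realType) (n : nat) (V : finType) (phi : V -> 'I_n)
    (I : {set V}) : Prop :=
  origin_in_conv (fun j => gale_pt R (phi j)) (~: I).

Definition min_nonface (V : finType) (face : {set V} -> Prop) (S : {set V}) : Prop :=
  ~ face S /\ (forall T : {set V}, T \proper S -> face T).

(* K(J): vertices (i, r) with r < J i; its minimal non-faces are the unions of
   the full blocks over a minimal non-face of K; so a set is a face iff it
   contains none of these unions. *)
Definition Jconstr_face (m : nat) (face : {set 'I_m} -> Prop) (J : 'I_m -> nat)
    (sigma : {set {i : 'I_m & 'I_(J i)}}) : Prop :=
  forall S : {set 'I_m}, min_nonface face S ->
    ~ ([set x : {i : 'I_m & 'I_(J i)} | tag x \in S] \subset sigma).

Definition complex_iso (V1 V2 : finType) (face1 : {set V1} -> Prop)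
    (face2 : {set V2} -> Prop) : Prop :=
  exists f : V1 -> V2, bijective f /\
    forall sigma : {set V1}, face1 sigma <-> face2 (f @: sigma).

(* Nothing about the regular polygon is used: whether O lies in the convex
   hull of points listed with repetitions depends only on the set of distinct
   points, since weights can be collected on a fiber or moved to one of its
   elements.  Identify V with the disjoint union of the fibers of phi.  The
   complement of sigma then meets the fiber over i iff sigma does not contain
   the whole i-th block, so sigma is a Gale face iff the set F of blocks
   contained in sigma is a face of K_(2k-1).  As K_(2k-1) is closed under
   subsets, F is a face iff it contains no minimal non-face of K_(2k-1), which
   is the defining condition for sigma to be a face of K_(2k-1)(J). *)
From HB Require Import structures.
From mathcomp Require Import all_boot all_order all_algebra.
From mathcomp Require Import boolp reals trigo.

Set Implicit Arguments. Unset Strict Implicit. Unset Printing Implicit Defensive.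
Import Order.TTheory GRing.Theory Num.Theory.

Section ConvexHull.
Local Open Scope ring_scope.
Variable R : realType.

Lemma origin_in_conv_transfer (V W : finType) (q : V -> R * R) (p : W -> R * R)
    (A : {set V}) (B : {set W}) (w : V -> R) (w' : W -> R) :
  (forall j, 0 <= w' j) ->
  (forall g : R * R -> R,
     \sum_(v in A) w v * g (q v) = \sum_(j in B) w' j * g (p j)) ->
  \sum_(v in A) w v = 1 -> \sum_(v in A) w v * (q v).1 = 0 ->
  \sum_(v in A) w v * (q v).2 = 0 ->
  origin_in_conv p B.
Proof.
move=> w'_ge0 transfer s1 sx sy; exists w'; split=> //.
split; last by rewrite -(transfer fst) -(transfer snd).
rewrite -s1; under eq_bigr do rewrite -[w' _]mulr1.
by rewrite -(transfer (fun=> 1)); under eq_bigr do rewrite mulr1.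
Qed.

Lemma origin_in_conv_sub (V : finType) (p : V -> R * R) (A B : {set V}) :
  A \subset B -> origin_in_conv p A -> origin_in_conv p B.
Proof.
move=> AB [w [w_ge0 [s1 [sx sy]]]].
apply: (origin_in_conv_transfer (w' := fun v => if v \in A then w v else 0))
  s1 sx sy => [v | g]; first by case: ifP.
rewrite big_mkcond [RHS]big_mkcond; apply: eq_bigr => v _.
by case: ifP => [/(subsetP AB)-> | _]; [|case: ifP; rewrite ?mul0r].
Qed.

Lemma sum_by_fibers (V : finType) (n : nat) (phi : V -> 'I_n) (A : {set V})
    (w : V -> R) (g : 'I_n -> R) :
  \sum_(v in A) w v * g (phi v) =
  \sum_(i in phi @: A) (\sum_(v in A | phi v == i) w v) * g i.
Proof.
rewrite (partition_big phi (mem (phi @: A))) => [|v vA]; last exact: imset_f.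
apply: eq_bigr => i _; rewrite mulr_suml.
by apply: eq_bigr => v /andP[_ /eqP->].
Qed.

Lemma origin_in_conv_imset (V : finType) (n : nat) (p : 'I_n -> R * R)
    (phi : V -> 'I_n) (A : {set V}) :
  origin_in_conv (fun v => p (phi v)) A <-> origin_in_conv p (phi @: A).
Proof.
split=> -[w [w_ge0 [s1 [sx sy]]]].
  apply: (origin_in_conv_transfer (w' := fun i => \sum_(v in A | phi v == i) w v))
    s1 sx sy => [i | g]; first exact: sumr_ge0.
  exact: (sum_by_fibers phi A w (fun i => g (p i))).
(* all the weight of a vertex goes to one chosen element of its fiber *)
pose rep i := [pick v in A | phi v == i].
pose w' v := if rep (phi v) == Some v then w (phi v) else 0.
have fiber_w' i : i \in phi @: A -> \sum_(v in A | phi v == i) w' v = w i.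
  case/imsetP=> v0 v0A ->.
  have [u /andP[uA /eqP phi_u] rep_u] :
      {u | (u \in A) && (phi u == phi v0) & rep (phi v0) = Some u}.
    rewrite /rep; case: pickP => [u uP | none]; first by exists u.
    by have := none v0; rewrite v0A eqxx.
  rewrite (bigD1 u) /=; last by rewrite uA phi_u eqxx.
  rewrite /w' phi_u rep_u eqxx big1 ?addr0 // => v /andP[/andP[_ /eqP->] vu].
  by rewrite rep_u; case: eqP => // -[uv]; rewrite uv eqxx in vu.
have transfer (g : 'I_n -> R) :
    \sum_(v in A) w' v * g (phi v) = \sum_(i in phi @: A) w i * g i.
  by rewrite sum_by_fibers; apply: eq_bigr => i /fiber_w' ->.
apply: (origin_in_conv_transfer (w' := w')) s1 sx sy => [v | g].
  by rewrite /w'; case: ifP.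
by rewrite (transfer (fun i => g (p i))).
Qed.

End ConvexHull.

Section MinimalNonfaces.
Variables (T : finType) (face : {set T} -> Prop).
Hypothesis face_sub : forall X Y : {set T}, Y \subset X -> face X -> face Y.

Lemma faceP (X : {set T}) :
  face X <-> (forall S, min_nonface face S -> ~ S \subset X).
Proof.
split=> [faceX S [nonfaceS _] SX | noS]; first exact: nonfaceS (face_sub SX faceX).
apply: contrapT => nonfaceX.
pose nonface_in (Y : {set T}) := (Y \subset X) && ~~ `[< face Y >].
have nonface_in_X : nonface_in X by rewrite /nonface_in subxx; apply/asboolPn.
have [S /minsetP[/andP[SX /asboolPn nonfaceS] minS] _] := minset_exists nonface_in_X.
suff min_nonface_S : min_nonface face S by exact: noS min_nonface_S SX.
split=> // Y YS; apply: contrapT => nonfaceY.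
have nonface_in_Y : nonface_in Y.
  by rewrite /nonface_in (subset_trans (proper_sub YS) SX); apply/asboolPn.
have eq_YS := minS Y nonface_in_Y (proper_sub YS).
by rewrite eq_YS properxx in YS.
Qed.

End MinimalNonfaces.

Section Blowup.
Variables (m : nat) (J : 'I_m -> nat).
Local Notation blowup := {i : 'I_m & 'I_(J i)}.

Definition full_blocks (sigma : {set blowup}) : {set 'I_m} :=
  [set i | [forall r : 'I_(J i), Tagged (fun i => 'I_(J i)) r \in sigma]].

Lemma blocks_sub_full (S : {set 'I_m}) (sigma : {set blowup}) :
  ([set x : blowup | tag x \in S] \subset sigma) = (S \subset full_blocks sigma).
Proof.
apply/idP/idP => /subsetP blocks_in; apply/subsetP.
  by move=> i iS; rewrite inE; apply/forallP => r; apply: blocks_in; rewrite inE.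
by move=> [i r]; rewrite inE /= => /blocks_in; rewrite inE => /forallP; apply.
Qed.

Lemma Jconstr_faceE (face : {set 'I_m} -> Prop) (sigma : {set blowup}) :
  (forall X Y : {set 'I_m}, Y \subset X -> face X -> face Y) ->
  Jconstr_face face sigma <-> face (full_blocks sigma).
Proof.
move=> face_sub; rewrite (faceP face_sub).
by split=> noS S /noS; rewrite blocks_sub_full.
Qed.

Variables (V : finType) (phi : V -> 'I_m).
Hypothesis card_fiber : forall i, #|[set v | phi v == i]| = J i.

Lemma fiber_bijection :
  exists2 f : blowup -> V, bijective f & forall x, phi (f x) = tag x.
Proof.
pose f (x : blowup) : V := enum_val (cast_ord (esym (card_fiber (tag x))) (tagged x)).
have phi_f x : phi (f x) = tag x.
  by have := enum_valP (cast_ord (esym (card_fiber (tag x))) (tagged x)); rewrite inE => /eqP.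
exists f => //; apply: inj_card_bij.
  move=> [i r] [j s] eq_f; have eq_ij : i = j by have := phi_f (existT _ i r); rewrite eq_f phi_f.
  by case: j / eq_ij s eq_f => s /enum_val_inj/cast_ord_inj /= ->.
rewrite card_tagged -sum1_card (partition_big phi xpredT) //= sumnE big_map big_enum.
apply: eq_leq; apply: eq_bigr => i _; rewrite card_ord -card_fiber sum1dep_card.
by apply: eq_card => v; rewrite inE.
Qed.

Lemma imset_setC_blocks (f : blowup -> V) (sigma : {set blowup}) :
  bijective f -> (forall x, phi (f x) = tag x) ->
  phi @: (~: (f @: sigma)) = ~: full_blocks sigma.
Proof.
move=> [g fK gK] phi_f; apply/setP => i; rewrite !inE; apply/imsetP/idP.
  case=> v; rewrite inE -[v]gK; case: (g v) => j r; rewrite phi_f /= => v_out ->.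
  by apply: contra v_out => /forallP r_in; exact: imset_f (r_in r).
rewrite negb_forall => /existsP[r r_out].
exists (f (Tagged (fun i => 'I_(J i)) r)); last by rewrite phi_f.
by rewrite inE (mem_imset _ _ (can_inj fK)).
Qed.

End Blowup.

Theorem lemma6p4 (R : realType) (k : nat) (a : 'I_(2 * k - 1) -> nat) :
  (3 <= k)%N ->
  (forall i, (0 < a i)%N) ->
  forall (V : finType) (phi : V -> 'I_(2 * k - 1)),
    (forall i, #|[set v | phi v == i]| = a i) ->
    complex_iso (@Jconstr_face (2 * k - 1) (gale_face R (fun i : 'I_(2 * k - 1) => i)) a)
                (gale_face R phi).
Proof.
move=> _ _ V phi card_fiber.
have [f f_bij phi_f] := fiber_bijection card_fiber.
exists f; split=> // sigma.
have face_sub (X Y : {set 'I_(2 * k - 1)}) :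
    Y \subset X -> gale_face R (fun i => i) X -> gale_face R (fun i => i) Y.
  by move=> YX; apply: origin_in_conv_sub; rewrite setCS.
rewrite (Jconstr_faceE _ face_sub) /gale_face (origin_in_conv_imset _ phi).
by rewrite (imset_setC_blocks _ f_bij phi_f).
Qed.
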